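(* (i) The subKautz digraph $sK(d,\ell)$ has diameter $2\ell$ whenever either $d=3$ and $\ell\ge 4$, or $d\ge 3$ and $\ell=2$. (ii) The subKautz digraph $sK(3,3)$ has diameter $5$.
   Context: The subKautz digraph $sK(d,\ell)$ ($d,\ell\ge2$) has vertex set $\{x_1\ldots x_\ell\in\mathbb Z_{d+1}^\ell : x_i\neq x_{i+1},\ i=1,\ldots,\ell-1\}$ and arcs $x_1\ldots x_\ell\to x_2\ldots x_\ell x_{\ell+1}$ for every $x_{\ell+1}\in\mathbb Z_{d+1}$ with $x_{\ell+1}\neq x_1,x_\ell$. The diameter is the maximum directed distance between ordered pairs of vertices. *)

From mathcomp Require Import all_boot.
Unset Printing Implicit Defensive.

(* Z_{d+1} is represented by 'I_d.+1 (only equality of symbols matters).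
   A word x_1 ... x_l is a sequence of length l. *)

Definition sK_vertex (d l : nat) (x : seq 'I_d.+1) : Prop :=
  size x = l /\ forall i, i.+1 < l -> nth ord0 x i <> nth ord0 x i.+1.

Definition sK_arc (d l : nat) (x y : seq 'I_d.+1) : Prop :=
  sK_vertex d l x /\
  exists z : 'I_d.+1, z <> nth ord0 x 0 /\ z <> nth ord0 x l.-1 /\
    y = rcons (behead x) z.

Fixpoint sK_walk (d l : nat) (k : nat) (x y : seq 'I_d.+1) : Prop :=
  match k with
  | 0 => x = y
  | k'.+1 => exists w, sK_arc d l x w /\ sK_walk d l k' w y
  end.

Definition sK_dist_le (d l D : nat) (x y : seq 'I_d.+1) : Prop :=
  exists k, k <= D /\ sK_walk d l k x y.

Definition sK_diameter (d l D : nat) : Prop :=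
  (forall x y, sK_vertex d l x -> sK_vertex d l y -> sK_dist_le d l D x y) /\
  (exists x y, sK_vertex d l x /\ sK_vertex d l y /\
     forall k, sK_walk d l k x y -> D <= k).

From mathcomp Require Import all_boot zify.

(* A walk of length k from x to y in sK(d,l) is a word of length l + k that
   starts with x, ends with y, and in which every letter after the first l
   differs from its predecessor and from the letter l places before it.

   Upper bound: with at least four letters, the l letters between x and y
   can be chosen one at a time, each avoiding its predecessor and the
   letters of x and of y at the same position; only the last one must also
   avoid the first letter of y.  If that is impossible the four forbidden
   letters are distinct, and the choices can be made so that each letter
   also avoids the next letter of y, which yields a walk of length 2l - 1.

   Lower bound: for the explicit pairs below, the letters of a shorter
   connecting word are forced one after another until two of them clash.
   The diameter of sK(3,3) is computed exhaustively. *)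

Lemma mkseq_succ (T : Type) (W : nat -> T) (l : nat) : 0 < l ->
  mkseq (fun j => W j.+1) l = rcons (behead (mkseq W l)) (W l).
Proof.
move=> l_gt0; apply: (@eq_from_nth _ (W 0)).
  by rewrite size_rcons size_behead !size_mkseq; lia.
move=> i; rewrite size_mkseq => ltil.
rewrite nth_mkseq // nth_rcons size_behead size_mkseq.
case: ltnP => [lti|leli]; first by rewrite nth_behead nth_mkseq //; lia.
have -> : i = l.-1 by lia.
by rewrite eqxx; congr W; lia.
Qed.

Lemma mkseq_eq_nth {T : Type} (x0 : T) (W : nat -> T) (s : seq T) l :
  size s = l -> (forall j, j < l -> W j = nth x0 s j) -> mkseq W l = s.
Proof.
move=> size_s Ws; apply: (@eq_from_nth _ x0); first by rewrite size_mkseq.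
by move=> i; rewrite size_mkseq => lti; rewrite nth_mkseq // Ws.
Qed.

Definition sK_steps {T : Type} (l k : nat) (W : nat -> T) :=
  forall n, l <= n < l + k -> W n <> W n.-1 /\ W n <> W (n - l).

Section Words.
Context {d l : nat}.
Hypothesis l_gt0 : 0 < l.

Lemma sK_vertex_rcons (x : seq 'I_d.+1) z : sK_vertex d l x ->
  z <> nth ord0 x l.-1 -> sK_vertex d l (rcons (behead x) z).
Proof.
move=> [size_x x_adj] z_x; split; first by rewrite size_rcons size_behead size_x; lia.
move=> i lti; rewrite !nth_rcons size_behead size_x ifT; last lia.
case: (ltnP i.+1 l.-1) => [lti1|lei1]; first by rewrite !nth_behead; apply: x_adj; lia.
rewrite ifT ?nth_behead; last lia.
have -> : i.+1 = l.-1 by lia.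
exact: nesym.
Qed.

Lemma word_sK_walk k (W : nat -> 'I_d.+1) :
  (forall i, i.+1 < l -> W i <> W i.+1) -> sK_steps l k W ->
  sK_walk d l k (mkseq W l) (mkseq (fun j => W (k + j)) l).
Proof.
elim: k W => [|k IHk] W W_adj W_steps /=; first exact: eq_mkseq.
have [Wl_neq_pred Wl_neq_0] := W_steps l ltac:(lia).
exists (mkseq (fun j => W j.+1) l); split.
  split.
    split; first by rewrite size_mkseq.
    by move=> i lti; rewrite !nth_mkseq; [exact: W_adj | lia | lia].
  exists (W l); rewrite !nth_mkseq; [|lia|lia].
  by rewrite subnn in Wl_neq_0; split; [|split]; last exact: mkseq_succ.
have -> : mkseq (fun j => W (k.+1 + j)) l = mkseq (fun j => W (k + j).+1) l.
  by apply: eq_mkseq => j; rewrite addSn.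
apply: (IHk (fun n => W n.+1)) => [i lti|n rng].
  case: (ltnP i.+2 l) => [lti2|]; first exact: W_adj.
  move=> lei2; have eql : l = i.+2 by lia.
  by rewrite eql /= in Wl_neq_pred => /esym.
have [] := W_steps n.+1 ltac:(lia); have -> : n.+1 - l = (n - l).+1 by lia.
by have -> : n = n.-1.+1 by lia.
Qed.

Lemma sK_walk_word k (x y : seq 'I_d.+1) : sK_walk d l k x y ->
  exists W : nat -> 'I_d.+1,
    [/\ forall j, j < l -> W j = nth ord0 x j,
        forall j, j < l -> W (k + j) = nth ord0 y j & sK_steps l k W].
Proof.
elim: k x => [|k IHk] x /=.
  by move=> ->; exists (nth ord0 y); split => // n; lia.
move=> [w [[[size_x _] [z [z_neq_0 [z_neq_last ->]]]] walk_w]].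
have [W [W_w W_y W_steps]] := IHk _ walk_w.
pose V n := if n is n'.+1 then W n' else nth ord0 x 0.
have V_x j : j < l -> V j = nth ord0 x j.
  case: j => [|j] //= ltj; rewrite W_w; last lia.
  by rewrite nth_rcons size_behead size_x ifT ?nth_behead //; lia.
have V_l : V l = z.
  rewrite (_ : l = l.-1.+1) /=; last lia.
  by rewrite W_w ?nth_rcons ?size_behead ?size_x ?ltnn ?eqxx //; lia.
exists V; split=> [//|j ltj|n rng]; first by rewrite addSn /= W_y.
case: (ltngtP n l) => [|ltln|->]; first lia.
  case: n rng ltln => [|[|n]] rng ltln; [lia|lia|].
  rewrite (_ : n.+2 - l = (n.+1 - l).+1); last lia.
  by apply: W_steps; lia.
by rewrite V_l subnn (V_x 0) // (V_x l.-1) //; lia.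
Qed.

Lemma sK_walk_glue {x y : seq 'I_d.+1} {W : nat -> 'I_d.+1} {r : nat} :
  sK_vertex d l x -> sK_vertex d l y ->
  (forall j, j < l -> W j = nth ord0 x j) -> sK_steps l r W ->
  nth ord0 y 0 <> W (l + r).-1 ->
  (forall j, j < l -> nth ord0 y j <> W (r + j)) ->
  sK_walk d l (l + r) x y.
Proof.
move=> [size_x x_adj] [size_y y_adj] W_x W_steps y0_W y_W.
pose V n := if n < l + r then W n else nth ord0 y (n - (l + r)).
have V_W n : n < l + r -> V n = W n by rewrite /V => ->.
have V_y j : V (l + r + j) = nth ord0 y j.
  by rewrite /V ifF ?addKn //; lia.
have := word_sK_walk (l + r) V.
have -> : mkseq V l = x.
  by apply: (mkseq_eq_nth ord0) => [//|j ltj]; rewrite V_W ?W_x //; lia.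
have -> : mkseq (fun j => V (l + r + j)) l = y.
  by apply: (mkseq_eq_nth ord0) => [//|j _]; rewrite V_y.
apply=> [i lti|n rng].
  by rewrite !V_W ?W_x; [apply: x_adj|lia..].
case: (ltnP n (l + r)) => [ltn|len].
  by rewrite !V_W; [apply: W_steps; lia|lia..].
have [j -> ltj] : exists2 j, n = l + r + j & j < l by exists (n - (l + r)); lia.
rewrite V_y (_ : l + r + j - l = r + j); last lia.
rewrite (V_W (r + j)); last lia.
split; last exact: y_W.
case: j ltj => [|j] ltj; first by rewrite addn0 V_W; [|lia].
by rewrite addnS /= V_y => /esym; apply: y_adj.
Qed.

End Words.

Lemma exists_notin (T : finType) (s : seq T) : size s < #|T| -> exists e, e \notin s.
Proof.
move=> lt_s_T; apply/existsP; rewrite -negb_forall; apply/negP => /forallP s_cov.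
suff : #|T| <= size s by rewrite leqNgt lt_s_T.
apply: leq_trans (card_size s); apply: subset_leq_card; apply/subsetP => e _.
exact: s_cov.
Qed.

Lemma covering_uniq (T : finType) (s : seq T) :
  size s <= #|T| -> (forall e, e \in s) -> uniq s.
Proof.
move=> le_s_T s_cov; apply/card_uniqP/eqP; rewrite eqn_leq card_size /=.
by rewrite (@eq_card _ _ T) // => e; rewrite s_cov.
Qed.

Section UpperBound.
Context {d l : nat} (x y : seq 'I_d.+1).
Hypotheses (d_ge3 : 3 <= d) (l_gt0 : 0 < l).

Lemma avoid3 (a b c : 'I_d.+1) : exists e, [/\ e <> a, e <> b & e <> c].
Proof.
have [e] := @exists_notin _ [:: a; b; c] ltac:(rewrite card_ord /=; lia).
by rewrite !inE => /norP [/eqP e_a /norP [/eqP e_b /eqP e_c]]; exists e.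
Qed.

Definition admissible (W : nat -> 'I_d.+1) i :=
  (forall j, j < l -> W j = nth ord0 x j) /\
  forall j, j < i ->
    [/\ W (l + j) <> W (l + j).-1, W (l + j) <> W j & W (l + j) <> nth ord0 y j].

Definition update (W : nat -> 'I_d.+1) i e n := if n == l + i then e else W n.

Lemma admissible_update W i e : i < l -> admissible W i ->
  e <> W (l + i).-1 -> e <> nth ord0 x i -> e <> nth ord0 y i ->
  admissible (update W i e) i.+1.
Proof.
move=> lt_il [W_x W_ok] e_pred e_x e_y; rewrite /update.
split=> [j ltj|j]; first by rewrite ifF ?W_x //; lia.
rewrite ltnS leq_eqVlt => /predU1P [->|ltji].
  by rewrite eqxx !ifF ?(W_x i) //; try lia; split.
by rewrite !ifF; [exact: W_ok| lia..].
Qed.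

Definition flexible i := forall c, exists2 W, admissible W i & W (l + i).-1 <> c.

Lemma flexibleS i : i < l -> flexible i -> flexible i.+1.
Proof.
move=> lt_il flex c; have [e [e_x e_y e_c]] := avoid3 (nth ord0 x i) (nth ord0 y i) c.
have [W W_adm W_e] := flex e; exists (update W i e).
  exact: admissible_update (nesym W_e) e_x e_y.
by rewrite /update addnS eqxx.
Qed.

(* Either the predecessor of some new letter equals the letter of y that the
   new letter must avoid, which leaves a free choice from then on, or every
   chosen letter also avoids the next letter of y. *)
Lemma flexible_or_shifted i : i <= l -> flexible i \/
  exists2 W, admissible W i & forall j, j.+1 < i -> W (l + j) <> nth ord0 y j.+1.
Proof.
elim: i => [_|i IHi lt_il].
  by right; exists (nth ord0 x) => //; split.
case: (IHi (ltnW lt_il)) => [flex|[W W_adm W_sh]]; first by left; apply: flexibleS.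
have W_upd e : update W i e (l + i.+1).-1 = e by rewrite /update addnS eqxx.
case: (eqVneq (W (l + i).-1) (nth ord0 y i)) => [W_y|W_y].
  left=> c; have [e [e_x e_y e_c]] := avoid3 (nth ord0 x i) (nth ord0 y i) c.
  exists (update W i e); last by rewrite W_upd.
  by apply: admissible_update; rewrite ?W_y.
right; have [e [e_x e_y e_W]] := avoid3 (nth ord0 x i) (nth ord0 y i) (W (l + i).-1).
exists (update W i e); first exact: admissible_update.
move=> j ltji; rewrite /update ifF; last lia.
case: (ltnP j.+1 i) => [|leij]; first exact: W_sh.
have -> : l + j = (l + i).-1 by lia.
have -> : j.+1 = i by lia.
exact/eqP.
Qed.

Lemma admissible_steps {W i} : admissible W i -> sK_steps l i W.
Proof.
move=> [_ W_ok] n rng; have [] := W_ok (n - l) ltac:(lia).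
by have -> : l + (n - l) = n by lia.
Qed.

Lemma admissible_sK_walk W : sK_vertex d l x -> sK_vertex d l y ->
  admissible W l -> W (l + l).-1 <> nth ord0 y 0 -> sK_walk d l (l + l) x y.
Proof.
move=> x_vtx y_vtx W_adm W_y0.
apply: (sK_walk_glue l_gt0 x_vtx y_vtx W_adm.1 (admissible_steps W_adm)).
  exact: nesym.
by move=> j ltj; have [_ _ /nesym] := W_adm.2 j ltj.
Qed.

Lemma sK_dist_le_double : 2 <= l -> sK_vertex d l x -> sK_vertex d l y ->
  sK_dist_le d l (2 * l) x y.
Proof.
move=> l_ge2 x_vtx y_vtx.
have lt_l1_l : l.-1 < l by rewrite ltn_predL.
have dist_2l W : admissible W l.-1.+1 -> W (l + l.-1.+1).-1 <> nth ord0 y 0 ->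
    sK_dist_le d l (2 * l) x y.
  rewrite prednK // => W_adm W_y0; exists (l + l); split; first lia.
  exact: admissible_sK_walk W_adm W_y0.
case: (@flexible_or_shifted l.-1 (leq_pred l)) => [flex|[W W_adm W_sh]].
  by have [W] := @flexibleS l.-1 lt_l1_l flex (nth ord0 y 0); apply: dist_2l.
pose last4 := [:: W (l + l.-1).-1; nth ord0 x l.-1; nth ord0 y l.-1; nth ord0 y 0].
case: (pickP [pred e | e \notin last4]) => [e|last4_cov].
  rewrite !inE => /norP [/eqP e_W /norP [/eqP e_x /norP [/eqP e_y /eqP e_y0]]].
  apply: (dist_2l (update W l.-1 e)); first exact: admissible_update.
  by rewrite /update addnS /= eqxx.
(* No letter avoids all of [last4], so its letters are distinct and the
   shifted prefix gives a walk of length 2l - 1. *)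
have /and4P [] : uniq last4.
  apply: covering_uniq; first by rewrite card_ord /=.
  by move=> e; move/negbFE: (last4_cov e).
rewrite !inE !negb_or => /and3P [_ /eqP W_y /eqP W_y0] /andP [_ /eqP x_y0] _ _.
exists (l + l.-1); split; first lia.
apply: (sK_walk_glue l_gt0 x_vtx y_vtx W_adm.1 (admissible_steps W_adm)).
  exact: nesym.
move=> j ltj; have [j0|j_gt0] := posnP j.
  by rewrite j0 addn0 W_adm.1 // => /esym.
have [->|j_neq] := eqVneq j l.-1.
  by rewrite (_ : l.-1 + l.-1 = (l + l.-1).-1); [exact: nesym|lia].
rewrite (_ : l.-1 + j = l + j.-1); last lia.
by have := W_sh j.-1; rewrite prednK // => /(_ ltac:(lia)) /nesym.
Qed.

End UpperBound.

(* Indices are passed as equations so that [lia] can discharge them. *)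
Lemma sK_steps_at {T : Type} {l k : nat} {V : nat -> T} : sK_steps l k V ->
  forall n a b, l <= n < l + k -> a = n.-1 -> b = n - l -> V n <> V a /\ V n <> V b.
Proof. by move=> V_steps n _ _ /V_steps + -> ->. Qed.

Definition word_of d l (f : nat -> nat) : seq 'I_d.+1 := mkseq (fun j => inord (f j)) l.

Lemma word_of_vertex d l f : (forall j, f j <= d) ->
  (forall i, i.+1 < l -> f i <> f i.+1) -> sK_vertex d l (word_of d l f).
Proof.
move=> f_le f_adj; split=> [|i lti]; first by rewrite size_mkseq.
rewrite !nth_mkseq; [|lia|lia].
by move=> /eqP; rewrite -val_eqE /= !inordK ?ltnS ?f_le // => /eqP; apply: f_adj.
Qed.

Lemma sK_walk_nat_word {d l k : nat} {f g : nat -> nat} : 0 < l ->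
  (forall j, f j <= d) -> (forall j, g j <= d) ->
  sK_walk d l k (word_of d l f) (word_of d l g) ->
  exists V : nat -> nat, [/\ forall n, V n <= d, forall j, j < l -> V j = f j,
    forall j, j < l -> V (k + j) = g j & sK_steps l k V].
Proof.
move=> l_gt0 f_le g_le /(sK_walk_word l_gt0) [W [W_f W_g W_steps]].
exists (fun n => nat_of_ord (W n)); split=> [n|j ltj|j ltj|n rng].
- by rewrite -ltnS.
- by rewrite W_f // nth_mkseq // inordK // ltnS.
- by rewrite W_g // nth_mkseq // inordK // ltnS.
- by have [W_pred W_l] := W_steps n rng; split=> /val_inj.
Qed.

Lemma sK_diameter_double_witness d l f g : 3 <= d -> 2 <= l ->
  (forall j, f j <= d) -> (forall j, g j <= d) ->
  (forall i, i.+1 < l -> f i <> f i.+1) -> (forall i, i.+1 < l -> g i <> g i.+1) ->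
  (forall k (V : nat -> nat), (forall n, V n <= d) -> (forall j, j < l -> V j = f j) ->
     (forall j, j < l -> V (k + j) = g j) -> sK_steps l k V -> 2 * l <= k) ->
  sK_diameter d l (2 * l).
Proof.
move=> d_ge3 l_ge2 f_le g_le f_adj g_adj far; split.
  by move=> x y; apply: sK_dist_le_double => //; lia.
exists (word_of d l f), (word_of d l g); split; first exact: word_of_vertex.
split=> [|k walk_k]; first exact: word_of_vertex.
have l_gt0 : 0 < l by lia.
have [V [V_le V_f V_g V_steps]] := sK_walk_nat_word l_gt0 f_le g_le walk_k.
exact: far V_le V_f V_g V_steps.
Qed.

Definition even_x l j := if j == l.-1 then 2 else j %% 2.
Definition even_y j := if j == 0 then 2 else j.+1 %% 2.

(* When l < k < 2l and k - l is even, the middle letters are forced to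
   alternate 3, 2, 3, ..., so the last of them equals the first letter 2 of y;
   every other k < 2l is excluded by a clash among a few letters. *)
Lemma even_pair_far l k (V : nat -> nat) : 4 <= l -> l %% 2 = 0 ->
  (forall n, V n <= 3) -> (forall j, j < l -> V j = even_x l j) ->
  (forall j, j < l -> V (k + j) = even_y j) -> sK_steps l k V -> 2 * l <= k.
Proof.
move=> l_ge4 l_even V_le V_x V_y V_steps.
have step := sK_steps_at V_steps.
have x_alt j : j < l.-1 -> V j = j %% 2.
  by move=> ltj; rewrite V_x /even_x ?ifF //; lia.
have x_last : V l.-1 = 2 by rewrite V_x /even_x ?eqxx //; lia.
have y_first n : n = k -> V n = 2 by move=> ->; rewrite -[k]addn0 V_y //; lia.
have y_alt n j : n = k + j -> 0 < j < l -> V n = j.+1 %% 2.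
  by move=> -> rng; rewrite V_y /even_y ?ifF //; lia.
case: (ltnP k (2 * l)) => // lt_k; exfalso.
case: (ltnP k l) => lt_kl.
  case: (ltnP k l.-1) => lt_kl1.
    have := x_alt k lt_kl1; have := y_first k erefl; lia.
  have := y_alt l 1 ltac:(lia) ltac:(lia).
  have := step l l.-1 0 ltac:(lia) erefl ltac:(lia).
  have := x_alt 0 ltac:(lia); lia.
case: (eqVneq (k - l) l.-1) => kl_l1.
  have := step k k.-1 l.-1 ltac:(lia) erefl ltac:(lia).
  have := y_first k erefl; lia.
case: (eqVneq ((k - l) %% 2) 1) => kl_odd.
  have := y_alt (k + 1) 1 erefl ltac:(lia).
  have := step (k + 1) k (k + 1 - l) ltac:(lia) ltac:(lia) erefl.
  have := x_alt (k + 1 - l) ltac:(lia); lia.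
case: (eqVneq k l) => k_eq.
  have := step k l.-1 0 ltac:(lia) ltac:(lia) ltac:(lia).
  have := y_first k erefl; lia.
have mid i : i < k - l -> forall n, n = l + i -> V n = 3 - i %% 2.
  elim: i => [|i IHi] lti n ->.
    have := step l l.-1 0 ltac:(lia) ltac:(lia) ltac:(lia).
    have := x_alt 0 ltac:(lia).
    have := step (l + l) (l + l).-1 l ltac:(lia) erefl ltac:(lia).
    have := y_alt (l + l) (l - (k - l)) ltac:(lia) ltac:(lia).
    have := V_le l; rewrite addn0; lia.
  have := IHi ltac:(lia) (l + i) erefl.
  have := step (l + i.+1) (l + i) i.+1 ltac:(lia) ltac:(lia) ltac:(lia).
  have := x_alt i.+1 ltac:(lia).
  have := step (l + l + i.+1) (l + l + i.+1).-1 (l + i.+1) ltac:(lia) erefl ltac:(lia).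
  have := y_alt (l + l + i.+1) (l - (k - l) + i.+1) ltac:(lia) ltac:(lia).
  have := V_le (l + i.+1); lia.
have := mid (k - l).-1 ltac:(lia) k.-1 ltac:(lia).
have := step k k.-1 (k - l) ltac:(lia) erefl erefl.
have := y_first k erefl; lia.
Qed.

Definition odd_x l j := if j == l - 1 then 1 else if j == l - 2 then 2 else j %% 2.
Definition odd_y l j :=
  if j == 0 then 1 else if j == 1 then 2 else if j == 2 then 3
  else if j == l - 1 then 2 else j.+1 %% 2.

(* Here the long forcing chain occurs for k = 2l - 2, where the middle
   letters alternate 2, 3, 2, ... *)
Lemma odd_pair_far l k (V : nat -> nat) : 4 <= l -> l %% 2 = 1 ->
  (forall n, V n <= 3) -> (forall j, j < l -> V j = odd_x l j) ->
  (forall j, j < l -> V (k + j) = odd_y l j) -> sK_steps l k V -> 2 * l <= k.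
Proof.
move=> l_ge4 l_odd V_le V_x V_y V_steps.
have step := sK_steps_at V_steps.
have x_alt j : j < l - 2 -> V j = j %% 2.
  by move=> ltj; rewrite V_x /odd_x ?ifF //; lia.
have x_2 : V (l - 2) = 2.
  by rewrite V_x /odd_x; [case: eqP => [?|_]; [lia|rewrite eqxx]|lia].
have x_1 : V (l - 1) = 1 by rewrite V_x /odd_x ?eqxx //; lia.
have y_at n j : n = k + j -> j < l -> V n = odd_y l j by move=> ->; apply: V_y.
have y_0 n : n = k -> V n = 1 by move=> def_n; rewrite (y_at n 0) //; lia.
have y_1 n : n = k + 1 -> V n = 2 by move=> def_n; rewrite (y_at n 1) //; lia.
have y_2 n : n = k + 2 -> V n = 3 by move=> def_n; rewrite (y_at n 2) //; lia.
have y_alt n j : n = k + j -> 3 <= j <= l - 2 -> V n = j.+1 %% 2.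
  by move=> def_n rng; rewrite (y_at n j) // /odd_y ?ifF //; lia.
have y_last n : n = k + (l - 1) -> V n = 2.
  move=> def_n; rewrite (y_at n (l - 1)) // /odd_y; last lia.
  by repeat (case: eqP => ? /=); lia.
case: (ltnP k (2 * l)) => // lt_k; exfalso.
case: (ltnP k l) => lt_kl.
  case: (ltnP k (l - 2)) => lt_kl2.
    have := x_alt k lt_kl2; have := y_0 k erefl.
    case: (ltnP (k + 1) (l - 2)) => lt_k1; last lia.
    have := x_alt (k + 1) lt_k1; have := y_1 (k + 1) erefl; lia.
  case: (eqVneq k (l - 2)) => k_eq.
    have := y_0 (l - 2) ltac:(lia); lia.
  have := y_alt (l + 2) 3 ltac:(lia) ltac:(lia).
  have := step (l + 2) (l + 1) 2 ltac:(lia) ltac:(lia) ltac:(lia).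
  have := x_alt 2 ltac:(lia); lia.
case: (eqVneq (k - l) (l - 2)) => kl_l2; last first.
  case: (eqVneq ((k - l) %% 2) 1) => kl_odd.
    have := step k k.-1 (k - l) ltac:(lia) erefl erefl.
    have := x_alt (k - l) ltac:(lia).
    have := y_0 k erefl; lia.
  case: (eqVneq (k - l) (l - 3)) => kl_l3.
    have := step (k + 1) k (l - 2) ltac:(lia) ltac:(lia) ltac:(lia).
    have := y_1 (k + 1) erefl; lia.
  case: (eqVneq (k - l) (l - 1)) => kl_l1.
    have := step k k.-1 (l - 1) ltac:(lia) erefl ltac:(lia).
    have := y_0 k erefl; lia.
  case: (eqVneq k l) => k_eq_l.
    have := step k (l - 1) 0 ltac:(lia) ltac:(lia) ltac:(lia).
    have := y_0 k erefl; lia.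
  have := y_alt (k + (l - 1 - (k - l))) (l - 1 - (k - l)) erefl ltac:(lia).
  have := step (k + (l - 1 - (k - l))) (k + (l - 1 - (k - l))).-1 (l - 1)
     ltac:(lia) erefl ltac:(lia).
  lia.
have mid i : i <= l - 4 -> forall n, n = l + i -> V n = 2 + i %% 2.
  elim: i => [|i IHi] lei n def_n.
    have := step n (l - 1) 0 ltac:(lia) ltac:(lia) ltac:(lia).
    have := x_alt 0 ltac:(lia).
    have := step (k + 2) (k + 2).-1 n ltac:(lia) erefl ltac:(lia).
    have := y_2 (k + 2) erefl.
    have := V_le n; lia.
  have := IHi ltac:(lia) (l + i) erefl.
  have := step n (l + i) i.+1 ltac:(lia) ltac:(lia) ltac:(lia).
  have := x_alt i.+1 ltac:(lia).
  have := step (k + (i + 3)) (k + (i + 3)).-1 n ltac:(lia) erefl ltac:(lia).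
  have := y_alt (k + (i + 3)) (i + 3) erefl ltac:(lia).
  have := V_le n; lia.
have := mid (l - 4) ltac:(lia) (l + (l - 4)) erefl.
have := step (l + (l - 3)) (l + (l - 4)) (l - 3) ltac:(lia) ltac:(lia) ltac:(lia).
have := x_alt (l - 3) ltac:(lia).
have := step (k + (l - 1)) (k + (l - 1)).-1 (l + (l - 3)) ltac:(lia) erefl ltac:(lia).
have := y_last (k + (l - 1)) erefl.
have := V_le (l + (l - 3)).
have := step k (l + (l - 3)) (k - l) ltac:(lia) ltac:(lia) erefl.
have := y_0 k erefl; lia.
Qed.

Definition short_x j := if j == 0 then 0 else 1.
Definition short_y j := if j == 0 then 1 else 0.

Lemma short_pair_far k (V : nat -> nat) :
  (forall j, j < 2 -> V j = short_x j) -> (forall j, j < 2 -> V (k + j) = short_y j) ->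
  sK_steps 2 k V -> 2 * 2 <= k.
Proof.
move=> V_x V_y V_steps.
have step := sK_steps_at V_steps.
have [x_0 x_1] : V 0 = 0 /\ V 1 = 1 by rewrite !V_x.
have y_0 n : n = k -> V n = 1 by move=> ->; rewrite -[k]addn0 V_y.
have y_1 n : n = k + 1 -> V n = 0 by move=> ->; rewrite V_y.
case: (ltnP k 4) => // lt_k4; exfalso.
case: (posnP k) => [k0|k_gt0]; first by have := y_0 0 (esym k0); lia.
case: (eqVneq k 1) => [k1|k_neq1].
  have := y_1 2 ltac:(lia); have := step 2 1 0 ltac:(lia) erefl erefl; lia.
case: (eqVneq k 2) => [k2|k_neq2].
  have := y_0 2 ltac:(lia); have := step 2 1 0 ltac:(lia) erefl erefl; lia.
have := y_0 3 ltac:(lia); have := step 3 2 1 ltac:(lia) erefl erefl; lia.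
Qed.

Lemma sK_diameter_even l : 4 <= l -> l %% 2 = 0 -> sK_diameter 3 l (2 * l).
Proof.
move=> l_ge4 l_even; apply: (@sK_diameter_double_witness _ _ (even_x l) even_y) => //.
- lia.
- by move=> j; rewrite /even_x; repeat (case: eqP => ? /=); lia.
- by move=> j; rewrite /even_y; repeat (case: eqP => ? /=); lia.
- by move=> i lti; rewrite /even_x; repeat (case: eqP => ? /=); lia.
- by move=> i lti; rewrite /even_y; repeat (case: eqP => ? /=); lia.
- by move=> k V V_le; apply: even_pair_far.
Qed.

Lemma sK_diameter_odd l : 4 <= l -> l %% 2 = 1 -> sK_diameter 3 l (2 * l).
Proof.
move=> l_ge4 l_odd; apply: (@sK_diameter_double_witness _ _ (odd_x l) (odd_y l)) => //.
- lia.
- by move=> j; rewrite /odd_x; repeat (case: eqP => ? /=); lia.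
- by move=> j; rewrite /odd_y; repeat (case: eqP => ? /=); lia.
- by move=> i lti; rewrite /odd_x; repeat (case: eqP => ? /=); lia.
- by move=> i lti; rewrite /odd_y; repeat (case: eqP => ? /=); lia.
- by move=> k V V_le; apply: odd_pair_far.
Qed.

Lemma sK_diameter_l2 d : 3 <= d -> sK_diameter d 2 4.
Proof.
move=> d_ge3; apply: (@sK_diameter_double_witness _ _ short_x short_y) => //.
- by move=> j; rewrite /short_x; case: eqP; lia.
- by move=> j; rewrite /short_y; case: eqP; lia.
- by move=> [|i].
- by move=> [|i].
- by move=> k V _; apply: short_pair_far.
Qed.

(* Letters are compared with [eqn] on their values rather than with [==]:
   the two are convertible, but [vm_compute] is an order of magnitude
   faster on the former. *)
Fixpoint sK_walkb d l (A : seq 'I_d.+1) k (x y : seq 'I_d.+1) : bool :=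
  if k is k'.+1 then
    has (fun z : 'I_d.+1 => [&& ~~ eqn z (nth ord0 x 0), ~~ eqn z (nth ord0 x l.-1)
                    & sK_walkb d l A k' (rcons (behead x) z) y]) A
  else all2 (fun a b : 'I_d.+1 => eqn a b) x y.

Lemma eqn_ordE d (a b : 'I_d.+1) : eqn a b = (a == b).
Proof. by []. Qed.

Lemma sK_walkbP d l (A : seq 'I_d.+1) k x y : 0 < l -> (forall z, z \in A) ->
  sK_vertex d l x -> reflect (sK_walk d l k x y) (sK_walkb d l A k x y).
Proof.
move=> l_gt0 A_full; elim: k x => [|k IHk] x x_vtx /=.
  have -> : all2 (fun a b : 'I_d.+1 => eqn a b) x y = (x == y) by rewrite eqseq_all.
  exact: eqP.
apply: (iffP hasP) => [[z _]|[_ [[_ [z [z_0 [z_l ->]]]] walk_z]]].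
  rewrite !eqn_ordE => /and3P [/eqP z_0 /eqP z_l walk_z].
  exists (rcons (behead x) z); split; first by split=> //; exists z.
  by apply/IHk: walk_z; apply: sK_vertex_rcons.
exists z => //; rewrite !eqn_ordE.
apply/and3P; split; [exact/eqP|exact/eqP|].
by apply/IHk => //; apply: sK_vertex_rcons.
Qed.

Definition letters4 : seq 'I_4 :=
  [:: @Ordinal 4 0 isT; @Ordinal 4 1 isT; @Ordinal 4 2 isT; @Ordinal 4 3 isT].

Lemma mem_letters4 (z : 'I_4) : z \in letters4.
Proof. by case: z => [[|[|[|[|?]]]] ?]. Qed.

Definition sK33_within5 : bool :=
  all (fun a : 'I_4 => all (fun b : 'I_4 => all (fun c : 'I_4 =>
  all (fun a' : 'I_4 => all (fun b' : 'I_4 => all (fun c' : 'I_4 =>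
    [&& ~~ eqn a b, ~~ eqn b c, ~~ eqn a' b' & ~~ eqn b' c'] ==>
    has (fun k => sK_walkb 3 3 letters4 k [:: a; b; c] [:: a'; b'; c']) (iota 0 6))
  letters4) letters4) letters4) letters4) letters4) letters4.

Lemma sK33_within5_true : sK33_within5.
Proof. by vm_compute. Qed.

Definition far33_x : seq 'I_4 := [:: @Ordinal 4 0 isT; @Ordinal 4 1 isT; @Ordinal 4 0 isT].
Definition far33_y : seq 'I_4 := [:: @Ordinal 4 1 isT; @Ordinal 4 2 isT; @Ordinal 4 0 isT].

Lemma far33_no_short_walk : all (fun k => ~~ sK_walkb 3 3 letters4 k far33_x far33_y) (iota 0 5).
Proof. by vm_compute. Qed.

Lemma sK33_diameter : sK_diameter 3 3 5.
Proof.
have walkbP k x := @sK_walkbP 3 3 letters4 k x _ isT mem_letters4.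
split=> [x y x_vtx y_vtx|].
  move: x_vtx y_vtx (x_vtx) => [size_x x_adj] [size_y y_adj].
  case: x size_x x_adj => [|a [|b [|c [|? ?]]]] // _ x_adj.
  case: y size_y y_adj => [|a' [|b' [|c' [|? ?]]]] // _ y_adj x_vtx.
  have := sK33_within5_true.
  move=> /allP /(_ a (mem_letters4 a)) /allP /(_ b (mem_letters4 b)).
  move=> /allP /(_ c (mem_letters4 c)) /allP /(_ a' (mem_letters4 a')).
  move=> /allP /(_ b' (mem_letters4 b')) /allP /(_ c' (mem_letters4 c')).
  rewrite !eqn_ordE; have [/eqP -> /eqP ->] := (x_adj 0 isT, x_adj 1 isT).
  have [/eqP -> /eqP ->] := (y_adj 0 isT, y_adj 1 isT).
  move=> /hasP [k]; rewrite mem_iota => lt_k /walkbP walk_k.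
  by exists k; split; [lia|exact: walk_k].
have far_x_vtx : sK_vertex 3 3 far33_x by split=> // [[|[|i]]].
exists far33_x, far33_y; split=> //; split=> [|k walk_k]; first by split=> // [[|[|i]]].
case: (ltnP k 5) => // lt_k5.
move/allP: far33_no_short_walk => /(_ k); rewrite mem_iota => /(_ lt_k5) /negP[].
exact/walkbP.
Qed.

Theorem corollary1 :
  (forall d l : nat, 2 <= d -> 2 <= l ->
     ((d = 3 /\ 4 <= l) \/ (3 <= d /\ l = 2)) ->
     sK_diameter d l (2 * l)) /\
  sK_diameter 3 3 5.
Proof.
split; last exact: sK33_diameter.
move=> d l _ _ [[-> l_ge4]|[d_ge3 ->]]; last exact: sK_diameter_l2.
have [l_even|l_odd] := eqVneq (l %% 2) 0; first exact: sK_diameter_even.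
by apply: sK_diameter_odd => //; lia.
Qed.
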